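(* The group $\mathscr G^{\mathrm{1cas}}_{\rho}$ contains elements with stationary, hence uncountable, row-support, and therefore elements with uncountable total support. Consequently, via any coordinate relabeling of the forcing, the cascade system $(\mathbb P_1,\mathscr G^{\mathrm{1cas}}_\rho,\mathscr F^{\mathrm{1cas}}_\rho)$ is not conjugate to any symmetric system on $\mathbb P_1$ whose automorphism group consists entirely of elements with countable total support.
   Context: Over a ground model $V$ of ZFC, $\mathbb P_0$ is the forcing of finite partial regressive functions on $\omega_1$; for $V$-generic $G_0$, $\rho:\omega_1\setminus\{0\}\to\omega_1$ is the induced total regressive map, $\operatorname{Succ}_\rho(\xi)=\{\eta:\rho(\eta)=\xi\}$, $\operatorname{cl}_\rho(A)$ the least $\rho$-closed superset of $A$. In $V[G_0]$, $\mathbb P_1=\operatorname{Fn}(\omega_1\times\omega\times\omega,2,{<}\omega)$. For $\xi<\omega_1$, $i<\omega$, $s\subseteq\omega$ finite or cofinite, $\tau^{\mathrm{1cas}}_{\xi,i,s}$ is the automorphism of $\mathbb P_1$ flipping the value of a condition at each coordinate $(\zeta,i,n)$ with $n\in s$ and $\zeta\in\{\xi\}\cup\operatorname{Succ}_\rho(\xi)$. $\mathscr G^{\mathrm{1cas}}_\rho$ is the group generated by them; $\operatorname{Fix}^{\mathrm{1cas}}_\rho(A)$ is the subgroup acting trivially on coordinates $(\zeta,j,n)$ with $\zeta\in\operatorname{cl}_\rho(A)$; $\mathscr F^{\mathrm{1cas}}_\rho$ is the filter generated by these for countable $A$. The total support of an automorphism is the set of coordinates $(\eta,j,n)$ on which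 it acts nontrivially; its row-support is the set of $\eta<\omega_1$ such that it acts nontrivially on some coordinate $(\eta,j,n)$. A coordinate relabeling is a bijection of $\omega_1\times\omega\times\omega$, inducing an automorphism of $\mathbb P_1$ by which groups of automorphisms are conjugated. *)

From Stdlib Require Import List ClassicalEpsilon.
Import ListNotations.
Set Implicit Arguments.

Definition countable {T : Type} (S : T -> Prop) : Prop :=
  exists f : T -> nat, forall x y, S x -> S y -> f x = f y -> x = y.

(* omega_1 as a well-order that is uncountable and all of whose proper initial
   segments are countable (this determines the order type omega_1). *)
Record omega1 := {
  o_carrier :> Type;
  o_lt : o_carrier -> o_carrier -> Prop;
  o_zero : o_carrier;
  o_lt_irrefl : forall x, ~ o_lt x x;
  o_lt_trans : forall x y z, o_lt x y -> o_lt y z -> o_lt x z;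
  o_lt_total : forall x y, o_lt x y \/ x = y \/ o_lt y x;
  o_lt_wf : well_founded o_lt;
  o_zero_least : forall x, x <> o_zero -> o_lt o_zero x;
  o_uncountable : ~ countable (fun _ : o_carrier => True);
  o_seg_countable : forall y, countable (fun x => o_lt x y)
}.
Arguments o_lt {o}.
Arguments o_zero {o}.

Section Defs.
Variable O : omega1.

Definition unbounded (C : O -> Prop) : Prop :=
  forall a : O, exists c, C c /\ o_lt a c.
Definition closed (C : O -> Prop) : Prop :=
  forall a : O, (exists b, o_lt b a) ->
    (forall b, o_lt b a -> exists c, C c /\ o_lt b c /\ o_lt c a) -> C a.
Definition club (C : O -> Prop) : Prop := closed C /\ unbounded C.
Definition stationary (S : O -> Prop) : Prop :=
  forall C, club C -> exists x, S x /\ C x.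

(* total regressive map on omega_1 \ {0} (its value at 0 is irrelevant) *)
Definition regressive (rho : O -> O) : Prop :=
  forall x, x <> o_zero -> o_lt (rho x) x.

Definition Succ (rho : O -> O) (xi : O) : O -> Prop :=
  fun eta => eta <> o_zero /\ rho eta = xi.

Definition coord : Type := (O * nat * nat)%type.

Definition finite_dom (p : coord -> option bool) : Prop :=
  exists l : list coord, forall c, p c <> None -> In c l.

Definition P1 : Type := { p : coord -> option bool | finite_dom p }.

Definition finite_nat (s : nat -> Prop) : Prop :=
  exists l : list nat, forall n, s n -> In n l.
Definition finite_or_cofinite (s : nat -> Prop) : Prop :=
  finite_nat s \/ finite_nat (fun n => ~ s n).

Definition flip_raw (S : coord -> Prop) (p : coord -> option bool) : coord -> option bool :=
  fun c => if excluded_middle_informative (S c) then option_map negb (p c) else p c.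

Lemma flip_fin (S : coord -> Prop) p : finite_dom p -> finite_dom (flip_raw S p).
Proof.
  intros [l Hl]; exists l; intros c Hc; apply Hl; intro E; apply Hc.
  unfold flip_raw; destruct (excluded_middle_informative (S c)); rewrite E; reflexivity.
Qed.

Definition flip (S : coord -> Prop) (p : P1) : P1 :=
  exist _ (flip_raw S (proj1_sig p)) (flip_fin S (proj2_sig p)).

Definition cas_set (rho : O -> O) (xi : O) (i : nat) (s : nat -> Prop) : coord -> Prop :=
  fun c => match c with (zeta, j, n) =>
    (zeta = xi \/ Succ rho xi zeta) /\ j = i /\ s n end.

Definition tau1cas (rho : O -> O) (xi : O) (i : nat) (s : nat -> Prop) : P1 -> P1 :=
  flip (cas_set rho xi i s).

Inductive G1cas (rho : O -> O) : (P1 -> P1) -> Prop :=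
| G1_id : G1cas rho (fun p => p)
| G1_tau : forall xi i s, finite_or_cofinite s -> G1cas rho (tau1cas rho xi i s)
| G1_comp : forall g h, G1cas rho g -> G1cas rho h -> G1cas rho (fun p => g (h p))
| G1_inv : forall g h, G1cas rho g -> (forall p, h (g p) = p) -> (forall p, g (h p) = p) ->
    G1cas rho h
| G1_ext : forall g h, G1cas rho g -> (forall p, g p = h p) -> G1cas rho h.

Definition acts_nontriv (a : P1 -> P1) (c : coord) : Prop :=
  exists p : P1, proj1_sig (a p) c <> proj1_sig p c.

Definition total_support (a : P1 -> P1) : coord -> Prop := acts_nontriv a.
Definition row_support (a : P1 -> P1) : O -> Prop :=
  fun eta => exists j n, acts_nontriv a (eta, j, n).

Record relabeling := {
  rl_f : coord -> coord;
  rl_g : coord -> coord;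
  rl_fg : forall c, rl_f (rl_g c) = c;
  rl_gf : forall c, rl_g (rl_f c) = c
}.

Lemma relabel_fin (f g : coord -> coord) (Hfg : forall c, f (g c) = c) p :
  finite_dom p -> finite_dom (fun c => p (g c)).
Proof.
  intros [l Hl]; exists (map f l); intros c Hc.
  rewrite <- (Hfg c); apply in_map; apply Hl; exact Hc.
Qed.

(* induced automorphism: the value of p at c is moved to f c *)
Definition relabel_act (pi : relabeling) (p : P1) : P1 :=
  exist _ (fun c => proj1_sig p (rl_g pi c)) (relabel_fin _ _ (rl_fg pi) (proj2_sig p)).
Definition relabel_act_inv (pi : relabeling) (p : P1) : P1 :=
  exist _ (fun c => proj1_sig p (rl_f pi c)) (relabel_fin _ _ (rl_gf pi) (proj2_sig p)).

Definition conjG (pi : relabeling) (G : (P1 -> P1) -> Prop) : (P1 -> P1) -> Prop :=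
  fun h => exists g, G g /\ forall p, h p = relabel_act pi (g (relabel_act_inv pi p)).

End Defs.

Arguments regressive {O}.
Arguments stationary {O}.
Arguments G1cas {O}.
Arguments row_support {O}.
Arguments total_support {O}.
Arguments conjG {O}.

From Stdlib Require Import List ClassicalEpsilon Lia Cantor
  FunctionalExtensionality ProofIrrelevance.

(* By Fodor's lemma the regressive map [rho] has a stationary fiber [Succ rho xi].
   The single cascade generator [tau1cas rho xi 0 {0}] flips the coordinate
   [(eta, 0, 0)] for every [eta] in that fiber, so its row support is stationary,
   hence uncountable (a countable subset of omega_1 is bounded), and so is its total
   support.  Conjugating by a coordinate relabeling moves total supports injectively,
   so every conjugate of the cascade group still contains an automorphism with
   uncountable total support. *)

Lemma countable_sub {T : Type} (A B : T -> Prop) :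
  (forall x, A x -> B x) -> countable B -> countable A.
Proof. intros sAB [f f_inj]; exists f; auto. Qed.

Lemma countable_preimage {T U : Type} (F : T -> U) (A : T -> Prop) (B : U -> Prop) :
  (forall x y, A x -> A y -> F x = F y -> x = y) ->
  (forall x, A x -> B (F x)) -> countable B -> countable A.
Proof. intros F_inj AB [f f_inj]; exists (fun x => f (F x)); auto. Qed.

Lemma countable_add {T : Type} (a : T) (A : T -> Prop) :
  countable A -> countable (fun y => y = a \/ A y).
Proof.
  intros [f f_inj].
  exists (fun y => if excluded_middle_informative (y = a) then 0 else S (f y)).
  intros x y Ax Ay.
  destruct (excluded_middle_informative (x = a)), (excluded_middle_informative (y = a));
    try congruence; intros [= E]; apply f_inj; tauto.
Qed.

Lemma countable_image {T U : Type} (F : T -> U) (A : T -> Prop) :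
  countable A -> countable (fun y => exists x, A x /\ y = F x).
Proof.
  intros [f f_inj].
  exists (fun y => match excluded_middle_informative (exists x, A x /\ y = F x) with
                   | left e => f (proj1_sig (constructive_indefinite_description _ e))
                   | right _ => 0 end).
  intros x y Ax Ay.
  destruct (excluded_middle_informative _) as [ex|]; [|contradiction].
  destruct (excluded_middle_informative _) as [ey|]; [|contradiction].
  destruct (proj2_sig (constructive_indefinite_description _ ex)) as [Ax' Ex].
  destruct (proj2_sig (constructive_indefinite_description _ ey)) as [Ay' Ey].
  intro E; rewrite Ex, Ey, (f_inj _ _ Ax' Ay' E); reflexivity.
Qed.

Lemma countable_union {I T : Type} (J : I -> Prop) (B : I -> T -> Prop) :
  countable J -> (forall i, J i -> countable (B i)) ->
  countable (fun x => exists i, J i /\ B i x).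
Proof.
  intros [f f_inj] B_count.
  destruct (choice (fun i (g : T -> nat) =>
              J i -> forall x y, B i x -> B i y -> g x = g y -> x = y)) as [g g_inj].
  { intro i; destruct (classic (J i)) as [Ji|nJi].
    - destruct (B_count i Ji) as [g Hg]; exists g; auto.
    - exists (fun _ => 0); tauto. }
  exists (fun x => match excluded_middle_informative (exists i, J i /\ B i x) with
                   | left e => let i := proj1_sig (constructive_indefinite_description _ e) in
                               Cantor.to_nat (f i, g i x)
                   | right _ => 0 end).
  intros x y Ux Uy.
  destruct (excluded_middle_informative _) as [ex|]; [|contradiction].
  destruct (excluded_middle_informative _) as [ey|]; [|contradiction].
  destruct (proj2_sig (constructive_indefinite_description _ ex)) as [Ji Bx].
  destruct (proj2_sig (constructive_indefinite_description _ ey)) as [Jj By].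
  intro E; apply (f_equal Cantor.of_nat) in E; rewrite !Cantor.cancel_of_to in E.
  injection E as Ef Eg.
  apply (f_inj _ _ Ji Jj) in Ef; rewrite Ef in Bx, Eg, Ji.
  exact (g_inj _ Ji _ _ Bx By Eg).
Qed.

Section Omega1.
Context {O : omega1}.

Lemma countable_bounded {S : O -> Prop} :
  countable S -> exists u, forall s, S s -> o_lt s u.
Proof.
  intro S_count; apply NNPP; intro unbounded_S.
  apply (o_uncountable O).
  apply countable_sub with (B := fun x => exists s, S s /\ (x = s \/ o_lt x s)).
  - intros x _; apply NNPP; intro N; apply unbounded_S; exists x; intros s Ss.
    destruct (o_lt_total O s x) as [|[->|]]; auto; exfalso; eauto.
  - apply countable_union; auto.
    intros s _; apply countable_add, o_seg_countable.
Qed.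

Lemma o_common_upper_bound (a b : O) : exists c, o_lt a c /\ o_lt b c.
Proof.
  destruct (@countable_bounded (fun y => y = a \/ y = b)) as [c Hc].
  - apply countable_add; exists (fun _ => 0); intros x y -> ->; reflexivity.
  - exists c; split; apply Hc; auto.
Qed.

Lemma stationary_not_countable {S : O -> Prop} : stationary S -> ~ countable S.
Proof.
  intros S_stat S_count; destruct (countable_bounded S_count) as [u Hu].
  destruct (S_stat (fun c => o_lt u c)) as [x [Sx ux]].
  - split.
    + intros a [b ba] cof; destruct (cof b ba) as [c [uc [_ ca]]].
      exact (o_lt_trans O _ _ _ uc ca).
    + intro a; destruct (o_common_upper_bound a u) as [c [ac uc]]; eauto.
  - exact (o_lt_irrefl O x (o_lt_trans O _ _ _ (Hu x Sx) ux)).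
Qed.

Lemma stationary_sub {A B : O -> Prop} :
  stationary A -> (forall x, A x -> B x) -> stationary B.
Proof.
  intros A_stat sAB C C_club; destruct (A_stat C C_club) as [x [Ax Cx]]; eauto.
Qed.

Lemma o_least {P : O -> Prop} {x : O} :
  P x -> exists m, P m /\ forall y, o_lt y m -> ~ P y.
Proof.
  induction x as [x IH] using (well_founded_ind (o_lt_wf O)); intro Px.
  destruct (classic (exists y, o_lt y x /\ P y)) as [[y [yx Py]]|N].
  - exact (IH y yx Py).
  - exists x; split; auto; intros y yx Py; eauto.
Qed.

Section IncreasingSequence.
Variable s : nat -> O.
Hypothesis s_incr : forall n, o_lt (s n) (s (S n)).

Lemma increasing_lt (n k : nat) : n < k -> o_lt (s n) (s k).
Proof.
  induction 1 as [|k _ IH]; auto.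
  exact (o_lt_trans O _ _ _ IH (s_incr k)).
Qed.

Lemma increasing_sup :
  exists a, (forall n, o_lt (s n) a) /\
            forall b, o_lt b a -> exists n, forall k, n < k -> o_lt b (s k).
Proof.
  destruct (@countable_bounded (fun y => exists n, True /\ y = s n)) as [u Hu].
  { apply countable_image; exists (fun n => n); auto. }
  destruct (@o_least (fun a => forall n, o_lt (s n) a) u) as [a [s_lt_a a_least]].
  { intro n; apply Hu; eauto. }
  exists a; split; auto.
  intros b ba; apply NNPP; intro N; apply (a_least b ba); intro n.
  destruct (o_lt_total O (s n) b) as [|[sb|bs]]; auto; exfalso; apply N; exists n;
    intros k nk; [rewrite <- sb|apply (o_lt_trans O _ _ _ bs)]; now apply increasing_lt.
Qed.

End IncreasingSequence.

(* [a] is the supremum of an omega-sequence each of whose steps passes a point of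
   every [C xi] with [xi] below the current term; closedness then puts [a] in the
   diagonal intersection. *)
Lemma club_diagonal_point (C : O -> O -> Prop) :
  (forall xi, club O (C xi)) -> exists a, a <> o_zero /\ forall xi, o_lt xi a -> C xi a.
Proof.
  intro C_club.
  destruct (choice (fun (ax : O * O) c => C (snd ax) c /\ o_lt (fst ax) c)) as [h Hh].
  { intros [a xi]; apply (proj2 (C_club xi)). }
  destruct (choice (fun a u => forall y,
              y = a \/ (exists xi, o_lt xi a /\ y = h (a, xi)) -> o_lt y u)) as [next Hnext].
  { intro a; apply countable_bounded, countable_add, countable_image, o_seg_countable. }
  pose (s n := Nat.iter n next o_zero).
  assert (s_incr : forall n, o_lt (s n) (s (S n))) by (intro n; apply Hnext; auto).
  destruct (increasing_sup s s_incr) as [a [s_lt_a s_cofinal]].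
  exists a; split.
  - intros ->; exact (o_lt_irrefl O _ (s_lt_a 0)).
  - intros xi xia; apply (proj1 (C_club xi)); [exists (s 0); auto|].
    intros b ba.
    destruct (s_cofinal b ba) as [n1 Hn1], (s_cofinal xi xia) as [n2 Hn2].
    pose (k := S (n1 + n2)).
    destruct (Hh (s k, xi)) as [Cc sc]; simpl in Cc, sc.
    exists (h (s k, xi)); repeat split; auto.
    + apply (o_lt_trans O _ _ _ (Hn1 k ltac:(lia)) sc).
    + apply (o_lt_trans O _ (s (S k))); auto.
      apply Hnext; right; exists xi; split; auto; apply Hn2; lia.
Qed.

Lemma regressive_stationary_fiber {rho : O -> O} :
  regressive rho -> exists xi, stationary (Succ O rho xi).
Proof.
  intro rho_regr; apply NNPP; intro N.
  destruct (choice (fun xi C => club O C /\ forall x, Succ O rho xi x -> ~ C x)) as [C HC].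
  { intro xi; apply NNPP; intro N'; apply N; exists xi; intros C C_club.
    apply NNPP; intro N''; apply N'; exists C; split; auto; intros x Sx Cx; eauto. }
  destruct (@club_diagonal_point C) as [a [a0 Ha]]; [intro xi; apply HC|].
  apply (proj2 (HC (rho a)) a); [split; auto|apply Ha, rho_regr, a0].
Qed.
End Omega1.

Section Automorphisms.
Context {O : omega1}.

Lemma finite_dom_point (c0 : coord O) :
  finite_dom (fun c => if excluded_middle_informative (c = c0) then Some true else None).
Proof.
  exists (c0 :: nil); intros c Hc.
  destruct (excluded_middle_informative (c = c0)); [left; auto|contradiction].
Qed.

Lemma flip_acts_nontriv (S : coord O -> Prop) (c : coord O) :
  S c -> acts_nontriv (flip S) c.
Proof.
  intro Sc; exists (exist _ _ (finite_dom_point c)); simpl; unfold flip_raw.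
  destruct (excluded_middle_informative (S c)); [|contradiction].
  destruct (excluded_middle_informative (c = c)); [discriminate|contradiction].
Qed.

Lemma Succ_sub_row_support_tau1cas (rho : O -> O) xi i (s : nat -> Prop) n eta :
  s n -> Succ O rho xi eta -> row_support (tau1cas rho xi i s) eta.
Proof. intros sn Seta; exists i, n; apply flip_acts_nontriv; simpl; auto. Qed.

Lemma countable_row_support {a : P1 O -> P1 O} :
  countable (total_support a) -> countable (row_support a).
Proof.
  destruct (choice (fun eta (jn : nat * nat) =>
              row_support a eta -> acts_nontriv a (eta, fst jn, snd jn))) as [jn Hjn].
  { intro eta; destruct (classic (row_support a eta)) as [[j [n Hjn]]|N].
    - exists (j, n); auto.
    - exists (0, 0); tauto. }
  apply countable_preimage with (F := fun eta => (eta, fst (jn eta), snd (jn eta))).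
  - intros x y _ _ [= E]; exact E.
  - exact Hjn.
Qed.

Lemma relabel_act_invK (pi : relabeling O) (p : P1 O) :
  relabel_act_inv pi (relabel_act pi p) = p.
Proof.
  destruct p as [p p_fin]; apply eq_sig_hprop; [intros; apply proof_irrelevance|].
  apply functional_extensionality; intro c; simpl; rewrite rl_gf; reflexivity.
Qed.

Section Conjugate.
Variables (pi : relabeling O) (g h : P1 O -> P1 O).
Hypothesis h_conj : forall p, h p = relabel_act pi (g (relabel_act_inv pi p)).

Lemma acts_nontriv_conj (c : coord O) :
  acts_nontriv g c -> acts_nontriv h (rl_f pi c).
Proof.
  intros [p Hp]; exists (relabel_act pi p).
  rewrite h_conj, relabel_act_invK; simpl; rewrite !rl_gf; exact Hp.
Qed.

Lemma countable_total_support_conj :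
  countable (total_support h) -> countable (total_support g).
Proof.
  apply countable_preimage with (F := rl_f pi).
  - intros x y _ _ E; rewrite <- (rl_gf pi x), E, rl_gf; reflexivity.
  - exact acts_nontriv_conj.
Qed.

End Conjugate.
End Automorphisms.

Theorem proposition2p11 (O : omega1) (rho : O -> O) (Hrho : regressive rho) :
  (exists g, G1cas rho g /\ stationary (row_support g)
             /\ ~ countable (row_support g) /\ ~ countable (total_support g)) /\
  (forall (pi : relabeling O) (H : (P1 O -> P1 O) -> Prop),
     (forall h, H h -> countable (total_support h)) ->
     ~ (forall g, conjG pi (G1cas rho) g -> exists h, H h /\ forall p, h p = g p)).
Proof.
  destruct (regressive_stationary_fiber Hrho) as [xi Succ_stat].
  pose (g := tau1cas rho xi 0 (fun n => n = 0)).
  assert (g_in : G1cas rho g).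
  { apply G1_tau; left; exists (0 :: nil); intros n ->; left; reflexivity. }
  assert (row_stat : stationary (row_support g)).
  { apply (stationary_sub Succ_stat); intro eta.
    apply Succ_sub_row_support_tau1cas with (n := 0); reflexivity. }
  assert (row_unc : ~ countable (row_support g)) by exact (stationary_not_countable row_stat).
  assert (total_unc : ~ countable (total_support g)).
  { intro total_count; exact (row_unc (countable_row_support total_count)). }
  split; [exists g; auto|].
  intros pi H H_countable H_conj.
  destruct (H_conj (fun p => relabel_act pi (g (relabel_act_inv pi p)))) as [h [Hh h_eq]].
  { exists g; auto. }
  exact (total_unc (countable_total_support_conj _ _ _ h_eq (H_countable h Hh))).
Qed.
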